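(* Consider any realized trajectory of the patient model in the context, let $\lambda_1>0$, $z_t:=[x_t\ u_t^\top\ d_t^\top]^\top$ and $\bar V_t:=\lambda_1I_{2M+1}+\sum_{s=1}^{t-1}z_sz_s^\top$. Then $$\sum_{t=1}^T\|z_t\|^2_{\bar V_t^{-1}}\leq(2M+1)\log\Big(1+\frac{T(C_x^2+2)}{(2M+1)\lambda_1}\Big)\Big[2+\frac{C_x^2+2}{\log(2)\lambda_1}\Big],$$ where $C_x:=\frac{\bar b+\bar c+\bar w}{1-\bar a}$.
   Context: Patient model: $M\geq1$ treatments; $\mathcal U:=\{v\in\{0,1\}^M:\|v\|_0\leq1\}$. $x_{t+1}=ax_t+b^\top u_t+c^\top d_t+w_t$ with actions $u_t\in\mathcal U$ and adherence $d_t\in\mathcal U$, $d^i_t\mid x_t,u^i_t\sim\mathrm{Bernoulli}(u^i_t\sigma(x_t+\mu_i))$, $\sigma$ the sigmoid; $x_1$ distributed as the noise. Parameters $a\in[0,\bar a]$ (known $\bar a\in(0,1)$), $\|b\|_\infty\leq\bar b$, $\|c\|_\infty\leq\bar c$, $\mu\in[-\bar\mu,\bar\mu]^M$. Noise i.i.d., zero-symmetric, $\sigma_s^2$-subgaussian, $|w_t|\leq\bar w$ ($\bar w>0$), log-concave density, known variance. $\|v\|_A:=\sqrt{v^\top Av}$. *)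

From HB Require Import structures.
From mathcomp Require Import all_boot all_order all_algebra.
From mathcomp Require Import all_classical all_reals all_analysis.
Set Implicit Arguments. Unset Strict Implicit. Unset Printing Implicit Defensive.
Import Order.TTheory GRing.Theory Num.Theory.
Local Open Scope ring_scope.

Definition in_U (R : realType) (M : nat) (v : 'cV[R]_M) : bool :=
  [forall i, (v i ord0 == 0%R) || (v i ord0 == 1%R)] && (#|[set i | v i ord0 != 0%R]| <= 1)%N.

Definition zvec (R : realType) (M : nat) (x : R) (u d : 'cV[R]_M)
  : 'cV[R]_(1 + (M + M)) := col_mx (x%:M) (col_mx u d).

Definition Vbar (R : realType) (M : nat) (lambda1 : R)
  (z : nat -> 'cV[R]_(1 + (M + M))) (t : nat) : 'M[R]_(1 + (M + M)) :=
  lambda1 *: 1%:M + \sum_(1 <= s < t) (z s *m (z s)^T).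

Definition wnorm2 (R : realType) (n : nat) (A : 'M[R]_n) (v : 'cV[R]_n) : R :=
  ((v^T *m A *m v) ord0 ord0).

(* Write [V_t] for the regularized Gram matrix and [y_t = |z_t|^2_(V_t^-1)].
   By the matrix determinant lemma [det V_(t+1) = det V_t (1 + y_t)], so
   [sum_t ln (1 + y_t) = ln (det V_(T+1) / lambda1^n)]; Hadamard's inequality and
   AM-GM give [det V_(T+1) <= (tr V_(T+1) / n)^n <= (lambda1 + T L / n)^n] whenever
   [|z_t|^2 <= L].  Since [lambda1 y_t <= |z_t|^2 <= L], the elementary bound
   [y <= (2 + L / (ln 2 lambda1)) ln (1 + y)] on [0, L / lambda1] turns this into the
   claim.  For the patient model [|x_t| <= C_x] by induction on the dynamics, and
   [u_t], [d_t] are 0/1 vectors with at most one nonzero entry, so [L = C_x^2 + 2]. *)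

From HB Require Import structures.
From mathcomp Require Import all_boot all_order all_algebra.
From mathcomp Require Import all_classical all_reals all_analysis.
From mathcomp Require Import lra ring.
Set Implicit Arguments. Unset Strict Implicit. Unset Printing Implicit Defensive.
Import Order.TTheory GRing.Theory Num.Theory.
Local Open Scope ring_scope.

Section LnBounds.
Variable R : realType.

Lemma le_2ln1D (y : R) : 0 <= y -> y <= 1 -> y <= 2 * ln (1 + y).
Proof.
move=> y0 y1; have y1p : 0 < 1 + y by rewrite ltr_wpDr.
have : -1 < - (y / (1 + y)) by rewrite ltrN2 ltr_pdivrMr // mul1r; lra.
move/le_ln1Dx; have -> : 1 + - (y / (1 + y)) = (1 + y)^-1 by field; rewrite gt_eqF.
rewrite lnV ?posrE // lerN2 ler_pdivrMr // mulrDr mulr1 => hy.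
have : ln (1 + y) * y <= ln (1 + y) by rewrite ler_piMr // ln_ge0 // lerDl.
lra.
Qed.

(* Split at [y = 1]: below use [le_2ln1D], above use [y <= L / lam] and [ln 2 <= ln (1 + y)]. *)
Lemma le_ln1D_bounded (lam L y : R) : 0 < lam -> 0 <= y -> lam * y <= L ->
  y <= (2 + L / (ln 2 * lam)) * ln (1 + y).
Proof.
move=> lam0 y0 yL; have ln2 : 0 < ln (2 : R) by rewrite ln_gt0 // ltr1n.
have L0 : 0 <= L by apply: le_trans yL; rewrite mulr_ge0 // ltW.
have c0 : 0 <= L / (ln 2 * lam) by rewrite divr_ge0 // ltW // mulr_gt0.
have ly0 : 0 <= ln (1 + y) by rewrite ln_ge0 // lerDl.
rewrite mulrDl; case: (leP y 1) => y1.
  have := le_2ln1D y0 y1; have := mulr_ge0 c0 ly0; lra.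
have : L / (ln 2 * lam) * ln 2 <= L / (ln 2 * lam) * ln (1 + y).
  by rewrite ler_wpM2l // ler_ln ?posrE //; lra.
have -> : L / (ln 2 * lam) * ln 2 = L / lam by field; rewrite !gt_eqF.
have : y <= L / lam by rewrite ler_pdivlMr // mulrC.
have : 0 <= 2 * ln (1 + y) by rewrite mulr_ge0.
lra.
Qed.

Lemma ln_prod (I : Type) (r : seq I) (P : pred I) (F : I -> R) :
  (forall i, P i -> 0 < F i) ->
  ln (\prod_(i <- r | P i) F i) = \sum_(i <- r | P i) ln (F i).
Proof.
move=> F_gt0; elim: r => [|i r IH]; first by rewrite !big_nil ln1.
rewrite !big_cons; case: ifP => // Pi.
by rewrite lnM ?posrE ?IH ?F_gt0 // prodr_gt0.
Qed.

End LnBounds.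

Lemma det_1Dmul (R : comPzRingType) n (a : 'cV[R]_n) (b : 'rV[R]_n) :
  \det (1%:M + a *m b) = 1 + (b *m a) 0 0.
Proof.
pose X : 'M[R]_(n + 1) := block_mx 1%:M a (- b) 1%:M.
pose E : 'M[R]_(n + 1) := block_mx 1%:M 0 b 1%:M.
have detE : \det E = 1 by rewrite det_lblock !det1 mulr1.
have EX : E *m X = block_mx 1%:M a 0 (1%:M + b *m a).
  by rewrite mulmx_block !mul1mx !mul0mx !addr0 mulmx1 subrr addrC.
have XE : X *m E = block_mx (1%:M + a *m b) a 0 1%:M.
  by rewrite mulmx_block !mulmx1 !mulmx0 ?addr0 ?mul1mx !add0r addNr.
have := congr1 determinant EX; rewrite det_mulmx detE mul1r det_ublock det1 mul1r.
have := congr1 determinant XE; rewrite det_mulmx detE mulr1 det_ublock det1 mulr1.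
by move=> <- ->; rewrite det_mx11 !mxE.
Qed.

Section QuadraticForms.
Variable R : realType.
Implicit Types (n : nat).

Definition sqnorm n (v : 'cV[R]_n) : R := \sum_i v i 0 ^+ 2.

Definition posdefmx n (A : 'M[R]_n) : Prop :=
  forall v : 'cV[R]_n, v != 0 -> 0 < wnorm2 A v.

Lemma sqnorm_ge0 n (v : 'cV[R]_n) : 0 <= sqnorm v.
Proof. by apply: sumr_ge0 => i _; apply: sqr_ge0. Qed.

Lemma sqnorm_gt0 n (v : 'cV[R]_n) : v != 0 -> 0 < sqnorm v.
Proof.
apply: contraNT; rewrite -leNgt => v0; apply/eqP/matrixP => i j.
rewrite (ord1 j) mxE; apply/eqP; rewrite -sqrf_eq0 eq_le sqr_ge0 andbT.
by apply: le_trans v0; rewrite /sqnorm (bigD1 i) //= lerDl sumr_ge0 // => k _; apply: sqr_ge0.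
Qed.

Lemma wnorm2D n (A B : 'M[R]_n) v : wnorm2 (A + B) v = wnorm2 A v + wnorm2 B v.
Proof. by rewrite /wnorm2 mulmxDr mulmxDl mxE. Qed.

Lemma wnorm2Z n k (A : 'M[R]_n) v : wnorm2 (k *: A) v = k * wnorm2 A v.
Proof. by rewrite /wnorm2 -scalemxAr -scalemxAl mxE. Qed.

Lemma wnorm2_sum n (I : Type) (r : seq I) (P : pred I) (F : I -> 'M[R]_n) v :
  wnorm2 (\sum_(i <- r | P i) F i) v = \sum_(i <- r | P i) wnorm2 (F i) v.
Proof. by rewrite /wnorm2 mulmx_sumr mulmx_suml summxE. Qed.

Lemma wnorm2_1 n (v : 'cV[R]_n) : wnorm2 1%:M v = sqnorm v.
Proof.
by rewrite /wnorm2 mulmx1 mxE; apply: eq_bigr => i _; rewrite mxE expr2.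
Qed.

Lemma wnorm2_delta n (A : 'M[R]_n) i : wnorm2 A (delta_mx i 0) = A i i.
Proof. by rewrite /wnorm2 trmx_delta -rowE -colE !mxE. Qed.

Lemma wnorm2_outer n (z v : 'cV[R]_n) : wnorm2 (z *m z^T) v = ((v^T *m z) 0 0) ^+ 2.
Proof.
rewrite /wnorm2 !mulmxA -(mulmxA _ z^T) -[z^T *m v]trmxK trmx_mul trmxK.
by rewrite [LHS]mxE big_ord1 [X in _ * X]mxE expr2.
Qed.

Lemma wnorm2_congr n m (P : 'M[R]_(m, n)) (A : 'M[R]_n) v :
  wnorm2 (P *m A *m P^T) v = wnorm2 A (P^T *m v).
Proof. by rewrite /wnorm2 trmx_mul trmxK !mulmxA. Qed.

Lemma delta_mx_neq0 n (i : 'I_n) : delta_mx i 0 != 0 :> 'cV[R]_n.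
Proof. by apply/negP => /eqP/matrixP/(_ i 0); rewrite !mxE !eqxx => /eqP; rewrite oner_eq0. Qed.

Lemma posdefmx_diag_gt0 n (A : 'M[R]_n) i : posdefmx A -> 0 < A i i.
Proof. by move=> pA; rewrite -wnorm2_delta pA // delta_mx_neq0. Qed.

Definition schur1 n (A : 'M[R]_(1 + n)) : 'M[R]_n :=
  drsubmx A - (A 0 0)^-1 *: (dlsubmx A *m ursubmx A).

Definition schur_elim n (A : 'M[R]_(1 + n)) : 'M[R]_(1 + n) :=
  block_mx 1%:M 0 (- ((A 0 0)^-1 *: dlsubmx A)) 1%:M.

Lemma ulsubmx_scalar n (A : 'M[R]_(1 + n)) : ulsubmx A = (A 0 0)%:M.
Proof. by rewrite [LHS]mx11_scalar !mxE; congr (A _ _)%:M; apply: val_inj. Qed.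

Lemma mul_schur_elim n (A : 'M[R]_(1 + n)) : A 0 0 != 0 ->
  schur_elim A *m A = block_mx (ulsubmx A) (ursubmx A) 0 (schur1 A).
Proof.
move=> a0; rewrite /schur_elim -[X in _ *m X]submxK mulmx_block !mul1mx !mul0mx !addr0.
rewrite ulsubmx_scalar mul_mx_scalar scalerN scalerA mulrV ?unitfE // scale1r addNr.
by rewrite mulNmx -scalemxAl addrC.
Qed.

Lemma schur_elim_congr n (A : 'M[R]_(1 + n)) : A^T = A -> A 0 0 != 0 ->
  schur_elim A *m A *m (schur_elim A)^T = block_mx (ulsubmx A) 0 0 (schur1 A).
Proof.
move=> sA a0; have rc : (dlsubmx A)^T = ursubmx A by rewrite trmx_dlsub sA.
rewrite mul_schur_elim // tr_block_mx !trmx1 trmx0 linearN /= linearZ /= rc.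
rewrite mulmx_block !mulmx1 !mulmx0 !mul0mx !addr0 add0r ulsubmx_scalar.
by rewrite mul_scalar_mx scalerN scalerA mulrV ?unitfE // scale1r addNr.
Qed.

Lemma det_schur1 n (A : 'M[R]_(1 + n)) : A 0 0 != 0 -> \det A = A 0 0 * \det (schur1 A).
Proof.
move=> a0; have := congr1 determinant (mul_schur_elim a0).
by rewrite det_mulmx det_lblock !det1 !mul1r det_ublock ulsubmx_scalar det_scalar1.
Qed.

Lemma schur1_sym n (A : 'M[R]_(1 + n)) : A^T = A -> (schur1 A)^T = schur1 A.
Proof.
move=> sA; have rc : (dlsubmx A)^T = ursubmx A by rewrite trmx_dlsub sA.
have cr : (ursubmx A)^T = dlsubmx A by rewrite -rc trmxK.
by rewrite /schur1 linearB /= linearZ /= trmx_mul rc cr trmx_drsub sA.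
Qed.

Lemma schur1_posdef n (A : 'M[R]_(1 + n)) : A^T = A -> posdefmx A ->
  posdefmx (schur1 A).
Proof.
move=> sA pA v v0; have a0 : A 0 0 != 0.
  by rewrite gt_eqF // (posdefmx_diag_gt0 0 pA).
pose x := col_mx (0 : 'cV[R]_1) v.
have Px0 : (schur_elim A)^T *m x != 0.
  rewrite tr_block_mx !trmx1 trmx0 mul_block_col !mul0mx !add0r mul1mx col_mx_eq0.
  by rewrite negb_and mul1mx v0 orbT.
have := pA _ Px0; rewrite -wnorm2_congr schur_elim_congr //.
rewrite /wnorm2 /x tr_col_mx mul_row_block mul_row_col trmx0.
by rewrite !mul0mx !mulmx0 !add0r.
Qed.

Lemma schur1_diag_le n (A : 'M[R]_(1 + n)) : A^T = A -> 0 < A 0 0 ->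
  forall i, schur1 A i i <= drsubmx A i i.
Proof.
move=> sA a0 i; have rc : (dlsubmx A)^T = ursubmx A by rewrite trmx_dlsub sA.
rewrite /schur1 -rc !mxE big_ord1 !mxE gerBl.
by apply: mulr_ge0; [rewrite invr_ge0 ltW | rewrite -expr2 sqr_ge0].
Qed.

(* Hadamard's inequality, by induction through the Schur complement of [A 0 0]. *)
Lemma posdefmx_det n (A : 'M[R]_n) : A^T = A -> posdefmx A ->
  0 < \det A <= \prod_i A i i.
Proof.
elim: n A => [|n IH] A sA pA; first by rewrite det_mx00 big_ord0 ltr01 lexx.
move: A sA pA; rewrite -[n.+1]/(1 + n)%N => A sA pA.
have a0 : 0 < A 0 0 := posdefmx_diag_gt0 0 pA.
have /andP[S0 Sprod] := IH _ (schur1_sym sA) (schur1_posdef sA pA).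
have -> : \prod_(i < 1 + n) A i i = A 0 0 * \prod_i drsubmx A i i.
  rewrite big_ord_recl; congr (_ * _); apply: eq_bigr => i _.
  by rewrite !mxE; congr fun_of_matrix; apply: val_inj.
rewrite det_schur1 ?gt_eqF // pmulr_rgt0 //= ler_pM2l // S0 /=.
apply: le_trans Sprod _; apply: ler_prod => i _.
by rewrite (ltW (posdefmx_diag_gt0 i (schur1_posdef sA pA))) schur1_diag_le.
Qed.

Lemma posdefmx_det_le_tr n (A : 'M[R]_n) : A^T = A -> posdefmx A ->
  \det A <= (\tr A / n%:R) ^+ n.
Proof.
move=> sA pA; have /andP[_ hadamard] := posdefmx_det sA pA.
apply: le_trans hadamard _.
have [+ _] := @leif_AGM R _ predT (fun i => A i i) (fun i _ => ltW (posdefmx_diag_gt0 i pA)).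
by rewrite card_ord.
Qed.

End QuadraticForms.

Section EllipticalPotential.
Variables (R : realType) (n : nat) (lam : R) (z : nat -> 'cV[R]_n).
Hypothesis lam_gt0 : 0 < lam.

Definition gram t : 'M[R]_n := lam *: 1%:M + \sum_(1 <= s < t) z s *m (z s)^T.

Definition potential t : R := wnorm2 (invmx (gram t)) (z t).

Lemma gram_sym t : (gram t)^T = gram t.
Proof.
rewrite /gram linearD /= linearZ /= trmx1 linear_sum /=; congr (_ + _).
by apply: eq_bigr => s _; rewrite trmx_mul trmxK.
Qed.

Lemma wnorm2_gram_ge t v : lam * sqnorm v <= wnorm2 (gram t) v.
Proof.
rewrite /gram wnorm2D wnorm2Z wnorm2_1 lerDl wnorm2_sum.
by apply: sumr_ge0 => s _; rewrite wnorm2_outer sqr_ge0.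
Qed.

Lemma gram_posdef t : posdefmx (gram t).
Proof. by move=> v v0; apply: lt_le_trans (wnorm2_gram_ge t v); rewrite mulr_gt0 // sqnorm_gt0. Qed.

Lemma gram_unit t : gram t \in unitmx.
Proof.
have /andP[det_gt0 _] := posdefmx_det (gram_sym t) (gram_posdef t).
by rewrite unitmxE unitfE gt_eqF.
Qed.

Lemma gram_recr t : (1 <= t)%N -> gram t.+1 = gram t + z t *m (z t)^T.
Proof. by move=> t1; rewrite /gram big_nat_recr //= addrA. Qed.

Lemma gram1 : gram 1 = lam%:M.
Proof. by rewrite /gram big_geq // addr0 scalemx1. Qed.

Lemma potential_gram t : potential t = wnorm2 (gram t) (invmx (gram t) *m z t).
Proof.
have tr11 (X : 'M[R]_1) : X^T 0 0 = X 0 0 by rewrite mxE.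
rewrite /wnorm2 -mulmxA mulKVmx ?gram_unit //.
by rewrite -[RHS]tr11 trmx_mul trmxK mulmxA.
Qed.

Lemma potential_dot t : potential t = \sum_i (invmx (gram t) *m z t) i 0 * z t i 0.
Proof.
rewrite potential_gram /wnorm2 -mulmxA mulKVmx ?gram_unit // mxE.
by apply: eq_bigr => i _; rewrite mxE.
Qed.

Lemma potential_ge0 t : 0 <= potential t.
Proof.
rewrite potential_gram; apply: le_trans (wnorm2_gram_ge t _).
by rewrite mulr_ge0 ?sqnorm_ge0 ?ltW.
Qed.

(* Expand [0 <= |z - lam w|^2] with [w = gram t^-1 z] and use [lam |w|^2 <= potential t]. *)
Lemma lam_potential_le t : lam * potential t <= sqnorm (z t).
Proof.
set w := invmx (gram t) *m z t.
have wy : lam * sqnorm w <= potential t by rewrite potential_gram wnorm2_gram_ge.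
have : 0 <= \sum_i (z t i 0 - lam * w i 0) ^+ 2 by apply: sumr_ge0 => i _; apply: sqr_ge0.
have -> : \sum_i (z t i 0 - lam * w i 0) ^+ 2 =
    sqnorm (z t) - lam * 2 * potential t + lam ^+ 2 * sqnorm w.
  rewrite potential_dot /sqnorm !mulr_sumr -sumrN -!big_split /=.
  by apply: eq_bigr => i _; ring.
have : lam * (lam * sqnorm w) <= lam * potential t by rewrite ler_pM2l.
rewrite expr2 -mulrA; lra.
Qed.

Lemma det_gram_recr t : (1 <= t)%N ->
  \det (gram t.+1) = \det (gram t) * (1 + potential t).
Proof.
move=> t1; have -> : gram t.+1 = gram t *m (1%:M + (invmx (gram t) *m z t) *m (z t)^T).
  by rewrite mulmxDr mulmx1 !mulmxA mulmxV ?gram_unit // mul1mx gram_recr.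
by rewrite det_mulmx det_1Dmul /potential /wnorm2 mulmxA.
Qed.

Lemma det_gram t : \det (gram t.+1) = lam ^+ n * \prod_(1 <= s < t.+1) (1 + potential s).
Proof.
elim: t => [|t IH]; first by rewrite gram1 det_scalar big_geq // mulr1.
by rewrite det_gram_recr // IH [in RHS]big_nat_recr //= mulrA.
Qed.

Lemma tr_gram t : \tr (gram t) = lam * n%:R + \sum_(1 <= s < t) sqnorm (z s).
Proof.
rewrite /gram mxtraceD scalemx1 mxtrace_scalar mulr_natr raddf_sum; congr (_ + _).
apply: eq_bigr => s _ /=; rewrite mxtrace_mulC /mxtrace big_ord1 mxE.
by apply: eq_bigr => i _; rewrite !mxE expr2.
Qed.

Lemma prod_potential_le T L : (0 < n)%N ->
  (forall t, (1 <= t)%N -> sqnorm (z t) <= L) ->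
  \prod_(1 <= s < T.+1) (1 + potential s) <= (1 + T%:R * L / (n%:R * lam)) ^+ n.
Proof.
move=> n_gt0 zL; have n_gt0R : 0 < n%:R :> R by rewrite ltr0n.
have sumL : \sum_(1 <= s < T.+1) sqnorm (z s) <= T%:R * L.
  apply: le_trans (ler_sum_nat (G := fun _ => L) _) _ => [s /andP[s1 _]|].
    exact: zL.
  by rewrite sumr_const_nat subn1 mulr_natl.
have tr_ge0 : 0 <= \tr (gram T.+1) / n%:R.
  by rewrite tr_gram divr_ge0 ?addr_ge0 ?mulr_ge0 ?sumr_ge0 ?ltW // => s _; apply: sqnorm_ge0.
have tr_le : \tr (gram T.+1) / n%:R <= lam * (1 + T%:R * L / (n%:R * lam)).
  have -> : lam * (1 + T%:R * L / (n%:R * lam)) = (lam * n%:R + T%:R * L) / n%:R.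
    by field; rewrite !gt_eqF.
  by rewrite tr_gram ler_pM2r ?invr_gt0 // lerD2l.
rewrite -(ler_pM2l (exprn_gt0 n lam_gt0)) -det_gram -exprMn.
apply: le_trans (posdefmx_det_le_tr (gram_sym _) (gram_posdef _)) _.
by apply: lerXn2r; rewrite ?nnegrE //; apply: le_trans tr_le.
Qed.

Lemma sum_potential_le T L : (0 < n)%N ->
  (forall t, (1 <= t)%N -> sqnorm (z t) <= L) ->
  \sum_(1 <= t < T.+1) potential t <=
    n%:R * ln (1 + T%:R * L / (n%:R * lam)) * (2 + L / (ln 2 * lam)).
Proof.
move=> n_gt0 zL; set K := 2 + L / (ln 2 * lam).
have L0 : 0 <= L by apply: le_trans (zL 1%N isT); apply: sqnorm_ge0.
have K0 : 0 <= K.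
  by rewrite addr_ge0 // divr_ge0 // ltW // mulr_gt0 // ln_gt0 // ltr1n.
have potK t : (1 <= t)%N -> potential t <= K * ln (1 + potential t).
  move=> t1; apply: le_ln1D_bounded (potential_ge0 t) _ => //.
  exact: le_trans (lam_potential_le t) (zL t t1).
have pos1D t : 0 < 1 + potential t by rewrite ltr_wpDr ?potential_ge0.
apply: (@le_trans _ _ (K * ln (\prod_(1 <= t < T.+1) (1 + potential t)))).
  rewrite ln_prod // mulr_sumr; apply: ler_sum_nat => t /andP[t1 _]; exact: potK.
have c_gt0 : 0 < 1 + T%:R * L / (n%:R * lam).
  by rewrite ltr_wpDr // divr_ge0 ?mulr_ge0 // ltW // mulr_gt0 // ltr0n.
rewrite mulrC ler_wpM2r // mulr_natl -lnXn //.
by rewrite ler_ln ?posrE ?prod_potential_le ?prodr_gt0 ?exprn_gt0.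
Qed.

End EllipticalPotential.

Section Actions.
Variables (R : realType) (M : nat).
Implicit Types (v : 'cV[R]_M).

Lemma in_U_sum_abs v : in_U v -> \sum_i `|v i 0| <= 1.
Proof.
case/andP=> /forallP v01 supp1.
have -> : \sum_i `|v i 0| = #|[set i | v i 0 != 0]|%:R.
  rewrite -sum1_card natr_sum [RHS]big_mkcond /=; apply: eq_bigr => i _.
  by rewrite inE; case/orP: (v01 i) => /eqP ->; rewrite ?eqxx ?normr0 ?normr1 ?oner_eq0.
by rewrite -[leRHS]/(1%:R) ler_nat.
Qed.

Lemma in_U_sqnorm v : in_U v -> sqnorm v <= 1.
Proof.
move=> vU; apply: le_trans (in_U_sum_abs vU); apply: ler_sum => i _.
case/andP: vU => /forallP/(_ i)/orP[] /eqP ->; by rewrite ?expr0n ?normr0 ?expr1n ?normr1.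
Qed.

Lemma in_U_dot_le (b v : 'cV[R]_M) (bbar : R) : 0 <= bbar ->
  (forall i, `|b i 0| <= bbar) -> in_U v -> `|(b^T *m v) 0 0| <= bbar.
Proof.
move=> bbar0 hb vU; rewrite mxE; apply: le_trans (ler_norm_sum _ _ _) _.
apply: (@le_trans _ _ (\sum_i bbar * `|v i 0|)).
  by apply: ler_sum => i _; rewrite normrM mxE ler_wpM2r.
by rewrite -mulr_sumr -[leRHS]mulr1 ler_wpM2l // in_U_sum_abs.
Qed.

Lemma sqnorm_zvec (x : R) (u d : 'cV[R]_M) :
  sqnorm (zvec x u d) = x ^+ 2 + sqnorm u + sqnorm d.
Proof.
rewrite /sqnorm /zvec big_split_ord big_ord1 col_mxEu mxE eqxx mulr1n.
rewrite big_split_ord /= -addrA; congr (_ + (_ + _)); apply: eq_bigr => i _.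
  by rewrite col_mxEd col_mxEu.
by rewrite !col_mxEd.
Qed.

End Actions.

Section PatientModel.
Variables (R : realType) (M : nat) (a abar bbar cbar wbar : R) (b c : 'cV[R]_M).
Variables (x w : nat -> R) (u d : nat -> 'cV[R]_M).
Hypotheses (a_ge0 : 0 <= a) (a_le : a <= abar) (abar_lt1 : abar < 1).
Hypotheses (bbar_ge0 : 0 <= bbar) (cbar_ge0 : 0 <= cbar).
Hypotheses (hb : forall i, `|b i 0| <= bbar) (hc : forall i, `|c i 0| <= cbar).
Hypotheses (hw : forall t, `|w t| <= wbar) (hx1 : `|x 1%N| <= wbar).
Hypotheses (hu : forall t, in_U (u t)) (hd : forall t, in_U (d t)).
Hypothesis hdyn : forall t, (1 <= t)%N ->
  x t.+1 = a * x t + (b^T *m u t) 0 0 + (c^T *m d t) 0 0 + w t.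

Let Cx := (bbar + cbar + wbar) / (1 - abar).

(* [Cx] is the fixed point of [X |-> abar X + bbar + cbar + wbar]. *)
Lemma state_abs_le t : (1 <= t)%N -> `|x t| <= Cx.
Proof.
have abar1 : 0 < 1 - abar by rewrite subr_gt0.
have CxE : Cx = abar * Cx + (bbar + cbar + wbar).
  by rewrite /Cx; field; rewrite gt_eqF.
have wbar0 : 0 <= wbar := le_trans (normr_ge0 _) (hw 0).
have abar0 : 0 <= abar := le_trans a_ge0 a_le.
have Cx0 : 0 <= Cx by apply: divr_ge0; [rewrite !addr_ge0 | exact: ltW].
clearbody Cx; elim: t => [|t IH] // _; case: (posnP t) => [->|t_gt0].
  apply: le_trans hx1 _; rewrite CxE; have := mulr_ge0 abar0 Cx0.
  have := bbar_ge0; have := cbar_ge0; lra.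
have axt : `|a * x t| <= abar * Cx by rewrite normrM ger0_norm // ler_pM // IH.
have bu := in_U_dot_le bbar_ge0 hb (hu t).
have cd := in_U_dot_le cbar_ge0 hc (hd t).
rewrite hdyn // CxE; apply: le_trans (ler_normD _ _) _.
apply: le_trans (lerD (ler_normD _ _) (hw t)) _.
apply: le_trans (lerD (lerD (ler_normD _ _) cd) (lexx _)) _.
lra.
Qed.

Lemma sqnorm_z_le t : (1 <= t)%N -> sqnorm (zvec (x t) (u t) (d t)) <= Cx ^+ 2 + 2.
Proof.
move=> t1; rewrite sqnorm_zvec.
have := in_U_sqnorm (hu t); have := in_U_sqnorm (hd t).
have xC := state_abs_le t1; have Cx0 : 0 <= Cx := le_trans (normr_ge0 _) xC.
have : x t ^+ 2 <= Cx ^+ 2 by rewrite -real_normK ?num_real // ler_sqr ?nnegrE.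
lra.
Qed.

End PatientModel.

Theorem mainTheorem16 (R : realType) (M : nat) (hM : (1 <= M)%N)
  (abar bbar cbar wbar mubar : R) (habar0 : 0 < abar) (habar1 : abar < 1)
  (hwbar : 0 < wbar)
  (a : R) (b c mu : 'cV[R]_M)
  (ha0 : 0 <= a) (ha1 : a <= abar)
  (hb : forall i, `|b i ord0| <= bbar) (hc : forall i, `|c i ord0| <= cbar)
  (hmu : forall i, `|mu i ord0| <= mubar)
  (x w : nat -> R) (u d : nat -> 'cV[R]_M)
  (hw : forall t, `|w t| <= wbar)
  (hx1 : `|x 1%N| <= wbar)
  (hu : forall t, in_U (u t)) (hd : forall t, in_U (d t))
  (hdu : forall t i, d t i ord0 <= u t i ord0)
  (hdyn : forall t, (1 <= t)%N ->
     x t.+1 = a * x t + (b^T *m u t) ord0 ord0 + (c^T *m d t) ord0 ord0 + w t)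
  (lambda1 : R) (hl : 0 < lambda1) (T : nat) :
  let z := fun t => zvec (x t) (u t) (d t) in
  let Cx := (bbar + cbar + wbar) / (1 - abar) in
  \sum_(1 <= t < T.+1) wnorm2 (invmx (Vbar lambda1 z t)) (z t)
  <= (2 * M + 1)%:R
     * ln (1 + T%:R * (Cx ^+ 2 + 2) / ((2 * M + 1)%:R * lambda1))
     * (2 + (Cx ^+ 2 + 2) / (ln 2 * lambda1)).
Proof.
cbv zeta.
have bbar0 : 0 <= bbar := le_trans (normr_ge0 _) (hb (Ordinal hM)).
have cbar0 : 0 <= cbar := le_trans (normr_ge0 _) (hc (Ordinal hM)).
have := sum_potential_le hl T (ltn0Sn (M + M))
  (sqnorm_z_le ha0 ha1 habar1 bbar0 cbar0 hb hc hw hx1 hu hd hdyn).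
by rewrite (_ : 2 * M + 1 = 1 + (M + M))%N // addnC mul2n addnn.
Qed.
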